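(* Let $\mathcal{P}$ be a partition of $\{1,\dots,n\}$ and $\mathcal{U}$ a subspace of $\mathbb{R}^n$. The following are equivalent: (1) $\mathcal{U}$ is recoverable by BMTFA; (2) $\mathcal{U}$ is $\mathcal{P}$-realizable; (3) $\mathcal{U}^\perp$ has the $\mathcal{P}$-ellipsoid fitting property.
   Context: A matrix is $\mathcal{P}$-block-diagonal if it is zero outside the principal submatrices indexed by the blocks $\mathcal{I}\in\mathcal{P}$. Block minimum trace factor analysis (BMTFA) with input symmetric $X$: minimize $\operatorname{tr}(L)$ subject to $X=B+L$, $L$ positive semidefinite, $B$ $\mathcal{P}$-block-diagonal. $\mathcal{U}$ is recoverable by BMTFA if for every $\mathcal{P}$-block-diagonal $B^\star$ and every positive semidefinite $L^\star$ with column space $\mathcal{U}$, $(B^\star,L^\star)$ is the unique optimum of BMTFA with input $B^\star+L^\star$. The $\mathcal{P}$-elliptope is $\mathcal{E}_{\mathcal{P}}=\{Y\succeq 0: Y_{\mathcal{I}}=I \text{ for all }\mathcal{I}\in\mathcal{P}\}$, where $Y_{\mathcal{I}}$ is the principal submatrix indexed by $\mathcal{I}$. $\mathcal{U}$ is $\mathcal{P}$-realizable if some $Y\in\mathcal{E}_{\mathcal{P}}$ has nullspace containing $\mathcal{U}$. For $\mathcal{I}\subseteq\{1,\dots,n\}$, $S^{\mathcal{I}}=\{x\in\mathbb{R}^n:\|x\|_2=1,\ x_j=0\text{ for }j\notin\mathcal{I}\}$. A centered ellipsoid in $\mathbb{R}^k$ is given by a positive semidefinite $M$, with boundary $\{y: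 y^TMy=1\}$. A subspace $\mathcal{V}$ has the $\mathcal{P}$-ellipsoid fitting property if there is a $k\times n$ matrix $V$ with row space $\mathcal{V}$ and a centered ellipsoid in $\mathbb{R}^k$ whose boundary contains $\bigcup_{\mathcal{I}\in\mathcal{P}}V(S^{\mathcal{I}})$. *)

From HB Require Import structures.
From mathcomp Require Import all_boot all_order all_algebra.
From mathcomp Require Import reals.
Set Implicit Arguments. Unset Strict Implicit. Unset Printing Implicit Defensive.
Import Order.TTheory GRing.Theory Num.Theory.
Local Open Scope ring_scope.

Section Defs.
Variable R : realType.

Definition psd (k : nat) (A : 'M[R]_k) : Prop :=
  A^T = A /\ forall x : 'cV[R]_k, 0 <= (x^T *m A *m x) 0 0.

Variable n : nat.
(* P : a partition of {0,...,n-1}, given as a set of blocks *)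
Variable P : {set {set 'I_n}}.

Definition blockdiag (B : 'M[R]_n) : Prop :=
  forall i j : 'I_n, (forall I, I \in P -> ~~ ((i \in I) && (j \in I))) -> B i j = 0.

Definition bmtfa_feasible (X B L : 'M[R]_n) : Prop :=
  X = B + L /\ psd L /\ blockdiag B.

Definition bmtfa_unique_opt (X B L : 'M[R]_n) : Prop :=
  bmtfa_feasible X B L /\
  forall B' L', bmtfa_feasible X B' L' ->
    \tr L <= \tr L' /\ (\tr L' = \tr L -> B' = B /\ L' = L).

(* Subspaces of R^n are represented as row spaces of matrices U : 'M_n.
   U is recoverable by BMTFA; column space of L is the row space of L^T. *)
Definition recoverable (U : 'M[R]_n) : Prop :=
  forall Bs Ls : 'M[R]_n, blockdiag Bs -> Bs^T = Bs -> psd Ls -> (Ls^T == U)%MS ->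
    bmtfa_unique_opt (Bs + Ls) Bs Ls.

Definition elliptope (Y : 'M[R]_n) : Prop :=
  psd Y /\ forall I, I \in P -> forall i j, i \in I -> j \in I ->
    Y i j = (i == j)%:R.

Definition realizable (U : 'M[R]_n) : Prop :=
  exists Y, elliptope Y /\ forall u : 'rV[R]_n, (u <= U)%MS -> Y *m u^T = 0.

Definition orthmx (U : 'M[R]_n) : 'M[R]_n := kermx U^T.

Definition sphere_on (I : {set 'I_n}) (x : 'cV[R]_n) : Prop :=
  \sum_i (x i 0) ^+ 2 = 1 /\ forall j, j \notin I -> x j 0 = 0.

Definition ellipsoid_fitting (V : 'M[R]_n) : Prop :=
  exists (k : nat) (W : 'M[R]_(k, n)) (M : 'M[R]_k),
    (W == V)%MS /\ psd M /\
    forall I, I \in P -> forall x, sphere_on I x ->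
      ((W *m x)^T *m M *m (W *m x)) 0 0 = 1.

End Defs.

(* (2) <-> (3): a point Y = S^T S of the elliptope has U in its nullspace exactly
   when the rows of S lie in the orthogonal complement of U, and then Y = W^T M W
   for a basis W of that complement and an ellipsoid M through the unit spheres of
   the blocks; conversely W^T M W is such a point.
   (2) -> (1): if Y lies in the elliptope and Y L* = 0, then for any feasible
   (B, L) the difference D = L - L* is block diagonal, so tr D = <Y, L> >= 0, and
   equality forces Y L = 0, hence Y D = 0 and D = 0.
   (1) -> (2) is the duality step. With L = U^T U and mask the 0/1 indicator of
   the blocks, minimise the penalty |mask o (I - Y)|^2 + 2 <L, Y> (o the entrywise
   product) over the psd matrices of bounded trace, a compact problem. At a minimiser Y0 the first-order conditions make L - B psd for the
   block-diagonal B = mask o (I - Y0), and <L - B, Y0> <= 0. Optimality of (0, L)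
   gives tr B <= 0, while tr B = |mask o (I - Y0)|^2 + <L, Y0> - <L - B, Y0>; all
   three terms are then zero, so Y0 is in the elliptope and L Y0 = 0. *)

From HB Require Import structures.
From mathcomp Require Import all_boot all_order all_algebra.
From mathcomp Require Import reals ring lra.
From mathcomp Require Import boolp topology normedtype matrix_normedtype derive.
Set Implicit Arguments. Unset Strict Implicit. Unset Printing Implicit Defensive.
Import Order.TTheory GRing.Theory Num.Theory numFieldNormedType.Exports.
Local Open Scope ring_scope.

Section Forms.
Variable R : realType.
Implicit Types (k : nat).

Definition mxform k (A : 'M[R]_k) (x y : 'cV[R]_k) : R := (x^T *m A *m y) 0 0.

Lemma mxform_sum k (A : 'M[R]_k) x y :
  mxform A x y = \sum_i \sum_j x i 0 * A i j * y j 0.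
Proof.
rewrite /mxform mxE; under eq_bigr => j _ do rewrite mxE big_distrl /=.
rewrite exchange_big /=; apply: eq_bigr => i _; apply: eq_bigr => j _.
by rewrite mxE.
Qed.

Lemma mxform_delta k (A : 'M[R]_k) i j :
  mxform A (delta_mx i 0) (delta_mx j 0) = A i j.
Proof. by rewrite /mxform trmx_delta -rowE -colE !mxE. Qed.

Lemma mxformDl k (A : 'M[R]_k) x y z : mxform A (x + y) z = mxform A x z + mxform A y z.
Proof. by rewrite /mxform linearD /= !mulmxDl mxE. Qed.

Lemma mxformDr k (A : 'M[R]_k) x y z : mxform A z (x + y) = mxform A z x + mxform A z y.
Proof. by rewrite /mxform mulmxDr mxE. Qed.

Lemma mxformZl k (A : 'M[R]_k) a x y : mxform A (a *: x) y = a * mxform A x y.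
Proof. by rewrite /mxform linearZ /= -!scalemxAl mxE. Qed.

Lemma mxformZr k (A : 'M[R]_k) a x y : mxform A x (a *: y) = a * mxform A x y.
Proof. by rewrite /mxform -scalemxAr mxE. Qed.

Lemma mxformDm k (A B : 'M[R]_k) x y : mxform (A + B) x y = mxform A x y + mxform B x y.
Proof. by rewrite /mxform mulmxDr mulmxDl mxE. Qed.

Lemma mxformBm k (A B : 'M[R]_k) x y : mxform (A - B) x y = mxform A x y - mxform B x y.
Proof. by rewrite /mxform mulmxBr mulmxBl !mxE. Qed.

Lemma mxformZm k (A : 'M[R]_k) a x y : mxform (a *: A) x y = a * mxform A x y.
Proof. by rewrite /mxform -scalemxAr -scalemxAl mxE. Qed.

Lemma mxformC k (A : 'M[R]_k) x y : A^T = A -> mxform A x y = mxform A y x.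
Proof.
move=> sA; rewrite /mxform -[in RHS]sA -[in RHS](trmxK x) -mulmxA -!trmx_mul.
by rewrite [RHS]mxE.
Qed.

Lemma mxform_gram m k (S : 'M[R]_(m, k)) x :
  mxform (S^T *m S) x x = \sum_i (S *m x) i 0 ^+ 2.
Proof.
rewrite /mxform mulmxA -trmx_mul -mulmxA mxE.
by apply: eq_bigr => i _; rewrite mxE expr2.
Qed.

Lemma mxform_mulmx m k (W : 'M[R]_(m, k)) (M : 'M[R]_m) x :
  mxform (W^T *m M *m W) x x = mxform M (W *m x) (W *m x).
Proof. by rewrite /mxform trmx_mul !mulmxA. Qed.
End Forms.

Section Psd.
Variable R : realType.
Implicit Types (k : nat).

Lemma psd_gram m k (S : 'M[R]_(m, k)) : psd (S^T *m S).
Proof.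
split=> [|x]; first by rewrite trmx_mul trmxK.
by rewrite -/(mxform _ x x) mxform_gram; apply: sumr_ge0 => i _; apply: sqr_ge0.
Qed.

Lemma psd_congruence m k (W : 'M[R]_(m, k)) (M : 'M[R]_m) :
  psd M -> psd (W^T *m M *m W).
Proof.
move=> [sM pM]; split=> [|x]; first by rewrite !trmx_mul trmxK sM mulmxA.
by rewrite -/(mxform _ x x) mxform_mulmx; apply: pM.
Qed.

Lemma psdD k (A B : 'M[R]_k) : psd A -> psd B -> psd (A + B).
Proof.
move=> [sA pA] [sB pB]; split=> [|x]; first by rewrite linearD /= sA sB.
by rewrite -/(mxform _ x x) mxformDm addr_ge0 ?pA ?pB.
Qed.

Lemma psdZ k a (A : 'M[R]_k) : 0 <= a -> psd A -> psd (a *: A).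
Proof.
move=> a0 [sA pA]; split=> [|x]; first by rewrite linearZ /= sA.
by rewrite -/(mxform _ x x) mxformZm mulr_ge0 ?pA.
Qed.

Lemma psd_diag_ge0 k (A : 'M[R]_k) i : psd A -> 0 <= A i i.
Proof. by case=> _ pA; rewrite -mxform_delta; apply: pA. Qed.

Lemma psd_trace_ge0 k (A : 'M[R]_k) : psd A -> 0 <= \tr A.
Proof. by move=> pA; apply: sumr_ge0 => i _; apply: psd_diag_ge0. Qed.

Lemma affine_ge0_slope0 (c d : R) : (forall t, 0 <= t * c + d) -> c = 0.
Proof.
move=> h; apply/eqP/negPn/negP => c0.
have := h (- (`|d| + 1) / c); rewrite mulrAC -mulrA divff // mulr1.
have := ler_norm d; lra.
Qed.

Lemma psd_diag0 k (A : 'M[R]_k) i j : psd A -> A j j = 0 -> A i j = 0.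
Proof.
move=> [sA pA] Ajj; suff : 2 * A i j = 0 by lra.
apply: (@affine_ge0_slope0 _ (A i i)) => t.
have := pA (t *: delta_mx j 0 + delta_mx i 0).
rewrite -/(mxform _ _ _) !(mxformDl, mxformDr, mxformZl, mxformZr) !mxform_delta.
by rewrite Ajj -{1}sA mxE; lra.
Qed.

Lemma psd_pivot k (A : 'M[R]_k) i : psd A -> 0 < A i i ->
  psd (A - (A i i)^-1 *: ((row i A)^T *m row i A)).
Proof.
move=> [sA pA] Aii; split=> [|x].
  by rewrite linearB linearZ /= trmx_mul trmxK sA.
set a := A i i; set p := mxform A (delta_mx i 0) x.
have rowx : (row i A *m x) 0 0 = p by rewrite /p /mxform trmx_delta -rowE.
have := pA (x + (- (p / a)) *: delta_mx i 0).
rewrite -[_ 0 0]/(mxform _ _ _) -[_ 0 0]/(mxform _ x x).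
rewrite mxformBm mxformZm mxform_gram big_ord1 rowx.
rewrite !(mxformDl, mxformDr, mxformZl, mxformZr) mxform_delta (mxformC _ _ sA) -/p.
have a0 : a != 0 by rewrite gt_eqF.
have e : - (p / a) * p + (- (p / a) * p + - (p / a) * (- (p / a) * a)) = - a^-1 * p ^+ 2.
  by field.
rewrite -/a; lra.
Qed.

Lemma psd_diag_eq0 k (A : 'M[R]_k) : psd A -> (forall j, A j j = 0) -> A = 0.
Proof. by move=> pA diag0; apply/matrixP => i j; rewrite mxE (psd_diag0 _ pA). Qed.

(* Cholesky by pivots. The vanishing rows let the rank-one factor of a pivot i be
   placed in row i, where the factor of the remainder is zero. *)
Lemma psd_factor_pivots k m (A : 'M[R]_k) : psd A ->
  (#|[set j | A j j != 0%R]| <= m)%N ->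
  exists S : 'M[R]_k, A = S^T *m S /\ forall j, A j j = 0 -> row j S = 0.
Proof.
have no_pivot B : psd B -> [set j | B j j != 0%R] = set0 ->
    exists S : 'M[R]_k, B = S^T *m S /\ forall j, B j j = 0 -> row j S = 0.
  move=> pB piv0; exists 0; split=> [|j _]; last by rewrite row0.
  rewrite mulmx0; apply: psd_diag_eq0 => // j.
  by have := in_set0 j; rewrite -piv0 inE => /negbFE/eqP.
elim: m A => [|m IHm] A pA card_piv.
  by apply: no_pivot => //; apply/eqP; rewrite -cards_eq0 -leqn0.
have [/(no_pivot A pA) // | [i piv_i]] := set_0Vmem [set j | A j j != 0%R].
have Aii : 0 < A i i.
  by rewrite lt_def psd_diag_ge0 // andbT; rewrite inE in piv_i.
set a := A i i in Aii *; set r := row i A.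
set A' := A - a^-1 *: (r^T *m r).
have A'E j l : A' j l = A j l - a^-1 * (A i j * A i l) by rewrite !mxE big_ord1 !mxE.
have A'ii : A' i i = 0 by rewrite A'E -/a mulrA mulVf ?mul1r ?subrr // gt_eqF.
have A'jj j : A j j = 0 -> A' j j = 0.
  by move=> Ajj; rewrite A'E Ajj (psd_diag0 i pA Ajj) mul0r mulr0 subr0.
have [|S' [AS' rowS']] := IHm A' (psd_pivot pA Aii).
  rewrite -ltnS (leq_trans _ card_piv) // (cardsD1 i [set j | A j j != 0%R]) piv_i ltnS.
  apply: subset_leq_card; apply/subsetP => j; rewrite !inE => A'jj_neq0.
  apply/andP; split; first by apply: contraTneq A'jj_neq0 => ->; rewrite A'ii eqxx.
  by apply: contraNN A'jj_neq0 => /eqP/A'jj ->.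
have S'i : delta_mx (0 : 'I_1) i *m S' = 0 by rewrite -rowE rowS'.
have S'e : S'^T *m delta_mx i (0 : 'I_1) = 0.
  by rewrite -[delta_mx _ _]trmx_delta -trmx_mul S'i trmx0.
have ee : delta_mx (0 : 'I_1) i *m delta_mx i (0 : 'I_1) = 1%:M :> 'M[R]_1.
  by rewrite mul_delta_mx; apply/matrixP => u v; rewrite !ord1 !mxE.
set v := (Num.sqrt a)^-1 *: r.
have vv : v^T *m v = a^-1 *: (r^T *m r).
  apply/matrixP => j l; rewrite !mxE !big_ord1 !mxE mulrACA -invfM -expr2.
  by rewrite sqr_sqrtr // ltW.
exists (S' + delta_mx i 0 *m v); split.
  rewrite [(_ + _)^T]linearD /= trmx_mul trmx_delta mulmxDl !mulmxDr.
  rewrite !mulmxA S'e mul0mx addr0 -(mulmxA v^T) S'i mulmx0 add0r.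
  by rewrite -(mulmxA v^T) ee mulmx1 vv -AS' subrK.
move=> j Ajj; rewrite linearD /= rowS' ?A'jj // add0r row_mul.
have ji : j != i by apply/eqP => eji; move: Aii; rewrite /a -eji Ajj ltxx.
by apply/rowP => l; rewrite !mxE big_ord1 !mxE (negbTE ji) mul0r.
Qed.

Lemma psd_factor k (A : 'M[R]_k) : psd A -> exists S : 'M[R]_k, A = S^T *m S.
Proof. by move=> pA; have [S [-> _]] := psd_factor_pivots pA (leqnn _); exists S. Qed.
End Psd.

Section Frobenius.
Variable R : realType.
Implicit Types (k : nat).

Definition frob k (A B : 'M[R]_k) : R := \sum_i \sum_j A i j * B i j.

Lemma frobE k (A B : 'M[R]_k) : frob A B = \tr (A *m B^T).
Proof. by apply: eq_bigr => i _; rewrite mxE; apply: eq_bigr => j _; rewrite mxE. Qed.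

Lemma frobDr k (A B C : 'M[R]_k) : frob A (B + C) = frob A B + frob A C.
Proof. by rewrite !frobE linearD /= mulmxDr mxtraceD. Qed.

Lemma frobNr k (A B : 'M[R]_k) : frob A (- B) = - frob A B.
Proof. by rewrite !frobE linearN /= mulmxN linearN. Qed.

Lemma frob_outer k (A : 'M[R]_k) x : frob A (x *m x^T) = mxform A x x.
Proof.
rewrite mxform_sum; apply: eq_bigr => i _; apply: eq_bigr => j _.
by rewrite mxE big_ord1 mxE; ring.
Qed.

Lemma mxtrace_mulmxT m n (M : 'M[R]_(m, n)) :
  \tr (M *m M^T) = \sum_i \sum_j M i j ^+ 2.
Proof.
by apply: eq_bigr => i _; rewrite mxE; apply: eq_bigr => j _; rewrite mxE expr2.
Qed.

Lemma mxtrace_mulmxT_ge0 m n (M : 'M[R]_(m, n)) : 0 <= \tr (M *m M^T).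
Proof. by rewrite mxtrace_mulmxT; do 2![apply: sumr_ge0 => ? _]; apply: sqr_ge0. Qed.

Lemma mxtrace_mulmxT_eq0 m n (M : 'M[R]_(m, n)) : \tr (M *m M^T) = 0 -> M = 0.
Proof.
rewrite mxtrace_mulmxT => sq0; apply/matrixP => i j; rewrite mxE.
have row0 := psumr_eq0P (fun i _ => sumr_ge0 _ (fun j _ => sqr_ge0 (M i j))) sq0.
have /eqP := psumr_eq0P (fun j _ => sqr_ge0 (M i j)) (row0 i isT) (i := j) isT.
by rewrite sqrf_eq0 => /eqP.
Qed.

Lemma frob_gram m p k (S : 'M[R]_(m, k)) (T : 'M[R]_(p, k)) :
  frob (S^T *m S) (T^T *m T) = \tr ((S *m T^T) *m (S *m T^T)^T).
Proof.
by rewrite frobE !trmx_mul !trmxK -mulmxA mxtrace_mulC !mulmxA.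
Qed.

Lemma frob_psd_ge0 k (A B : 'M[R]_k) : psd A -> psd B -> 0 <= frob A B.
Proof.
move=> /psd_factor[S ->] /psd_factor[T ->].
by rewrite frob_gram mxtrace_mulmxT_ge0.
Qed.

Lemma frob_psd_eq0 k (A B : 'M[R]_k) : psd A -> psd B -> frob A B = 0 -> A *m B = 0.
Proof.
move=> /psd_factor[S ->] /psd_factor[T ->].
rewrite frob_gram => /mxtrace_mulmxT_eq0 ST0.
by rewrite -mulmxA (mulmxA S) ST0 mul0mx mulmx0.
Qed.
End Frobenius.

Section RowSpaces.
Variable R : realType.

Lemma mulmx_trmx_submx m p n (Y : 'M[R]_(m, n)) (U : 'M[R]_n) (A : 'M[R]_(p, n)) :
  (A <= U)%MS -> Y *m U^T = 0 -> Y *m A^T = 0.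
Proof. by move=> sAU YU; rewrite -(mulmxKpV sAU) trmx_mul mulmxA YU mul0mx. Qed.

Lemma mulmx_trmx_eq0P m n (Y : 'M[R]_(m, n)) (U : 'M[R]_n) :
  (forall u : 'rV[R]_n, (u <= U)%MS -> Y *m u^T = 0) <-> Y *m U^T = 0.
Proof.
split=> [Yu | YU u sU]; last exact: mulmx_trmx_submx sU YU.
apply/matrixP => a b; transitivity ((Y *m (row b U)^T) a 0).
  by rewrite !mxE; apply: eq_bigr => l _; rewrite !mxE.
by rewrite Yu ?row_sub // !mxE.
Qed.

Lemma gram_eqmx n (U : 'M[R]_n) : (U^T *m U == U)%MS.
Proof.
have sGU : (U^T *m U <= U)%MS by apply: submxMl.
rewrite sGU /=; have [_ <-] := mxrank_leqif_sup sGU.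
have := mxrank_mul_ker U^T U; rewrite mxrank_tr => <-.
set C := (U^T :&: kermx U)%MS.
suff -> : C = 0 by rewrite mxrank0 addn0.
have sCU : (C <= U^T)%MS by apply: capmxSl.
have CU : C *m U = 0 by apply/eqP; rewrite -sub_kermx capmxSr.
apply: mxtrace_mulmxT_eq0.
by rewrite -(mulmxKpV sCU) trmx_mul trmxK mulmxA (mulmxKpV sCU) CU mul0mx mxtrace0.
Qed.
End RowSpaces.

Section Blocks.
Variables (R : realType) (n : nat) (P : {set {set 'I_n}}).

Definition block_id (Y : 'M[R]_n) :=
  forall I, I \in P -> forall i j, i \in I -> j \in I -> Y i j = (i == j)%:R.

Definition same_block (i j : 'I_n) := [exists I in P, (i \in I) && (j \in I)].

Lemma same_blockP i j :
  reflect (exists2 I, I \in P & (i \in I) && (j \in I)) (same_block i j).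
Proof. exact: exists_inP. Qed.

Lemma same_blockC i j : same_block i j = same_block j i.
Proof. by apply/same_blockP/same_blockP => -[I PI]; rewrite andbC; exists I. Qed.

Lemma same_block_refl i : partition P [set: 'I_n] -> same_block i i.
Proof.
case/and3P => /eqP coverP _ _; apply/same_blockP; exists (pblock P i).
  by rewrite pblock_mem // coverP.
by rewrite andbb mem_pblock coverP.
Qed.

Lemma blockdiag_offblock (B : 'M[R]_n) i j :
  blockdiag P B -> ~~ same_block i j -> B i j = 0.
Proof.
by move=> dB nij; apply: dB => I PI; apply: contraNN nij => ?; apply/same_blockP; exists I.
Qed.

Lemma sum_delta_mull k (F : 'I_k -> R) i : \sum_j (i == j)%:R * F j = F i.
Proof.
rewrite (bigD1 i) //= eqxx mul1r big1 ?addr0 // => j.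
by rewrite eq_sym => /negbTE ->; rewrite mul0r.
Qed.

Lemma frob_block_id (Y B : 'M[R]_n) : block_id Y -> blockdiag P B -> frob Y B = \tr B.
Proof.
move=> idY dB; apply: eq_bigr => i _; rewrite -(sum_delta_mull (B i) i).
apply: eq_bigr => j _.
have [/same_blockP[I PI /andP[iI jI]] | nij] := boolP (same_block i j).
  by rewrite (idY I PI i j iI jI).
by rewrite (blockdiag_offblock dB nij) !mulr0.
Qed.

Lemma block_id_mulmx_eq0 (Y B : 'M[R]_n) : partition P [set: 'I_n] ->
  block_id Y -> blockdiag P B -> Y *m B = 0 -> B = 0.
Proof.
move=> partP idY dB YB0; have trivP : trivIset P by case/and3P: partP.
apply/matrixP => i j; rewrite mxE.
have [/same_blockP[I PI /andP[iI jI]] | nij] := boolP (same_block i j); last first.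
  exact: blockdiag_offblock.
have := congr1 (fun M : 'M_n => M i j) YB0; rewrite !mxE => <-.
rewrite -(sum_delta_mull (B^~ j) i); apply: eq_bigr => l _ /=.
have [lI | lI] := boolP (l \in I); first by rewrite (idY I PI i l iI lI).
rewrite blockdiag_offblock ?mulr0 //; apply: contraNN lI => /same_blockP[J PJ /andP[lJ jJ]].
by rewrite -(def_pblock trivP PI jI) (def_pblock trivP PJ jJ).
Qed.
End Blocks.

Section Spheres.
Variables (R : realType) (n : nat).

Lemma sumsq_mxform (x : 'cV[R]_n) : \sum_i x i 0 ^+ 2 = mxform 1%:M x x.
Proof. by rewrite /mxform mulmx1 mxE; apply: eq_bigr => i _; rewrite mxE expr2. Qed.

Lemma mxform_sphere_on (Y : 'M[R]_n) (I : {set 'I_n}) x :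
  (forall i j, i \in I -> j \in I -> Y i j = (i == j)%:R) -> sphere_on I x ->
  mxform Y x x = 1.
Proof.
move=> idY [<- out0]; rewrite sumsq_mxform !mxform_sum.
apply: eq_bigr => i _; apply: eq_bigr => j _.
have [iI | /out0->] := boolP (i \in I); last by rewrite !mul0r.
have [jI | /out0->] := boolP (j \in I); last by rewrite !mulr0.
by rewrite idY // mxE.
Qed.

Lemma sphere_on_delta (I : {set 'I_n}) i : i \in I -> sphere_on I (delta_mx i 0 : 'cV[R]_n).
Proof.
move=> iI; split=> [|j jI]; first by rewrite sumsq_mxform mxform_delta mxE eqxx.
by rewrite mxE; case: eqP => // ji; rewrite ji iI in jI.
Qed.

Lemma sphere_on_block_id (Y : 'M[R]_n) (I : {set 'I_n}) : Y^T = Y ->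
  (forall x, sphere_on I x -> mxform Y x x = 1) ->
  forall i j, i \in I -> j \in I -> Y i j = (i == j)%:R.
Proof.
move=> sY Y1 i j iI jI; have Yll l : l \in I -> Y l l = 1.
  by move=> lI; rewrite -mxform_delta; apply/Y1/sphere_on_delta.
have [<- | ij] := eqVneq i j; first by rewrite Yll.
set c := (Num.sqrt (2 : R))^-1; pose x : 'cV[R]_n := c *: (delta_mx i 0 + delta_mx j 0).
have cc : c * c = 2^-1 by rewrite -invfM -expr2 sqr_sqrtr ?ler0n.
have form_x (A : 'M[R]_n) : mxform A x x = 2^-1 * (A i i + A i j + (A j i + A j j)).
  by rewrite /x !(mxformDl, mxformDr, mxformZl, mxformZr) !mxform_delta -mulrDr mulrA cc.
have xI : sphere_on I x.
  split=> [|l lI]; last first.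
    have [li lj] : l != i /\ l != j by split; apply: contraNneq lI => ->.
    by rewrite !mxE (negbTE li) (negbTE lj) addr0 mulr0.
  by rewrite sumsq_mxform form_x !mxE !eqxx (negbTE ij) eq_sym (negbTE ij) /=; lra.
have Yji : Y j i = Y i j by rewrite -{1}sY mxE.
by have := Y1 x xI; rewrite form_x Yll // Yll // Yji /=; lra.
Qed.
End Spheres.

Section EasyDirections.
Variables (R : realType) (n : nat) (P : {set {set 'I_n}}).

Lemma realizable_recoverable (U : 'M[R]_n) :
  partition P [set: 'I_n] -> realizable P U -> recoverable P U.
Proof.
move=> partP [Y [[pY idY] YU]] Bs Ls dBs _ pLs LsU.
have YLs : Y *m Ls = 0.
  rewrite -[Ls]trmxK; apply: mulmx_trmx_submx (proj1 (mulmx_trmx_eq0P _ _) YU).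
  by case/andP: LsU.
split=> [|B' L' [X_eq [pL' dB']]]; first by split=> //; split.
set D := L' - Ls.
have L'E : L' = Ls + D by rewrite addrC subrK.
have DE : D = Bs - B' by apply/eqP; rewrite subr_eq addrAC X_eq addrAC subrr add0r.
have dD : blockdiag P D by move=> i j nij; rewrite DE !mxE dBs // dB' // subr0.
have frobYL' : frob Y L' = \tr D.
  by rewrite L'E frobDr frobE pLs.1 YLs mxtrace0 add0r (frob_block_id idY dD).
have trL' : \tr L' = \tr Ls + \tr D by rewrite L'E mxtraceD.
split=> [|trE]; first by rewrite trL' lerDl -frobYL' frob_psd_ge0.
have YL' : Y *m L' = 0 by apply: frob_psd_eq0; rewrite // frobYL'; lra.
have D0 : D = 0.
  by apply: block_id_mulmx_eq0 partP idY dD _; rewrite mulmxBr YL' YLs subrr.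
by split; [apply/eqP; rewrite eq_sym -subr_eq0 -DE D0 | rewrite L'E D0 addr0].
Qed.

Lemma realizable_ellipsoid_fitting (U : 'M[R]_n) :
  realizable P U -> ellipsoid_fitting P (orthmx U).
Proof.
move=> [Y [[/psd_factor[S YE] idY] YU]].
have SU : S *m U^T = 0.
  apply: mxtrace_mulmxT_eq0; rewrite mxtrace_mulC trmx_mul trmxK !mulmxA.
  by rewrite -(mulmxA _ S^T) -YE -mulmxA (proj1 (mulmx_trmx_eq0P _ _) YU) mulmx0 mxtrace0.
have sSW : (S <= orthmx U)%MS by rewrite sub_kermx SU.
set W := orthmx U; set C := S *m pinvmx W.
exists n, W, (C^T *m C); split; first exact/eqmxP.
split=> [|I PI x xI]; first exact: psd_gram.
rewrite -[_ 0 0]/(mxform _ _ _) -mxform_mulmx mulmxA -trmx_mul -mulmxA mulmxKpV // -YE.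
exact: mxform_sphere_on (idY I PI) xI.
Qed.

Lemma ellipsoid_fitting_realizable (U : 'M[R]_n) :
  ellipsoid_fitting P (orthmx U) -> realizable P U.
Proof.
move=> [k [W [M [/andP[sWU _] [pM fitM]]]]].
have pY := psd_congruence W pM.
exists (W^T *m M *m W); split.
  split=> // I PI; apply: sphere_on_block_id pY.1 _ => x xI.
  by rewrite mxform_mulmx; apply: fitM PI x xI.
have WU : W *m U^T = 0 by apply/eqP; rewrite -sub_kermx.
by move=> u uU; rewrite -mulmxA (proj2 (mulmx_trmx_eq0P W U) WU u uU) mulmx0.
Qed.
End EasyDirections.

Section Minimizer.
Variable R : realType.

Lemma ler_sum2 k l (F : 'I_k -> 'I_l -> R) a b :
  (forall i j, 0 <= F i j) -> F a b <= \sum_i \sum_j F i j.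
Proof.
move=> F0; rewrite (bigD1 a) //= (bigD1 b) //= -addrA lerDl.
by rewrite addr_ge0 ?sumr_ge0 // => *; rewrite ?sumr_ge0.
Qed.

Lemma continuous_gram_entry n i j :
  continuous (fun v : 'rV[R]_(n * n) => ((vec_mx v)^T *m vec_mx v) i j).
Proof.
have -> : (fun v : 'rV[R]_(n * n) => ((vec_mx v)^T *m vec_mx v) i j) =
    (fun v => \sum_l v 0 (mxvec_index l i) * v 0 (mxvec_index l j)).
  by apply: funext => v; rewrite mxE; apply: eq_bigr => l _; rewrite !mxE.
apply: continuous_big => [|l _]; first exact: add_continuous.
by move=> v; apply: continuousM; apply: coord_continuous.
Qed.

Lemma continuousD_rV m (f g : 'rV[R]_m -> R) : continuous f -> continuous g ->
  continuous (fun v => f v + g v).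
Proof. by move=> fc gc v; apply: cvgD (fc v) (gc v). Qed.

Lemma continuousM_rV m (f g : 'rV[R]_m -> R) : continuous f -> continuous g ->
  continuous (fun v => f v * g v).
Proof. by move=> fc gc v; apply: cvgM (fc v) (gc v). Qed.

Section Compactness.
Import classical_sets.
Local Open Scope classical_set_scope.

(* The minimum is taken over the Gram matrices of a box of factors, which contains
   every psd Y of trace at most c; the minimiser itself may violate the trace bound. *)
Lemma psd_minorant_exists n (F : 'M[R]_n -> R) (c : R) : 0 <= c ->
  continuous (fun v : 'rV[R]_(n * n) => F ((vec_mx v)^T *m vec_mx v)) ->
  exists2 Y0, psd Y0 & forall Y, psd Y -> \tr Y <= c -> F Y0 <= F Y.
Proof.
move=> c0 Fc.
pose box := [set v : 'rV[R]_(n * n) | forall l, `[- (c + 1), c + 1] (v ord0 l)].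
have box_compact : compact box.
  by apply: (@rV_compact _ _ (fun=> `[- (c + 1), c + 1])) => _; apply: segment_compact.
have box0 : box !=set0.
  by exists 0 => i /=; rewrite mxE in_itv /=; apply/andP; split; lra.
have [v0 _ v0_min] := compact_EVT_min box0 box_compact (continuous_subspaceT Fc).
exists ((vec_mx v0)^T *m vec_mx v0) => [|Y pY trY]; first exact: psd_gram.
have [S YE] := psd_factor pY.
have Sbox : mxvec S \in box.
  apply: mem_set => l; case/mxvec_indexP: l => a b; rewrite mxvecE /= in_itv /=.
  have : S a b ^+ 2 <= c.
    apply: le_trans trY; rewrite YE mxtrace_mulC mxtrace_mulmxT.
    by apply: ler_sum2 => *; apply: sqr_ge0.
  by move=> Sab; apply/andP; split; nra.
by have := v0_min _ Sbox; rewrite mxvecK -YE.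
Qed.
End Compactness.
End Minimizer.

Lemma quadratic_ge0_slope_ge0 (R : realType) (a q s0 : R) : 0 < s0 ->
  (forall s, 0 < s -> s <= s0 -> 0 <= 2 * s * a + s ^+ 2 * q) -> 0 <= a.
Proof.
move=> s0_gt0 quad_ge0; rewrite leNgt; apply/negP => a_lt0.
pose s := Num.min s0 (- a / (`|q| + 1)).
have q1_gt0 : 0 < `|q| + 1 by rewrite ltr_wpDl.
have s_gt0 : 0 < s by rewrite lt_min s0_gt0 divr_gt0 // oppr_gt0.
have s_small : s * (`|q| + 1) <= - a by rewrite -ler_pdivlMr // ge_min lexx orbT.
have sq : s * q <= s * `|q| by apply: ler_wpM2l; [apply: ltW | apply: ler_norm].
have := quad_ge0 s s_gt0; rewrite ge_min lexx => /(_ isT); nra.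
Qed.

Section Penalty.
Variables (R : realType) (n : nat) (P : {set {set 'I_n}}) (L : 'M[R]_n).
Hypotheses (partP : partition P [set: 'I_n]) (pL : psd L).

Definition block_mask i j : R := (same_block P i j)%:R.

Lemma block_mask_ge0 i j : 0 <= block_mask i j.
Proof. exact: ler0n. Qed.

Lemma block_maskC i j : block_mask j i = block_mask i j.
Proof. by rewrite /block_mask same_blockC. Qed.

Lemma block_mask_diag i : block_mask i i = 1.
Proof. by rewrite /block_mask same_block_refl. Qed.

Definition block_misfit (Y : 'M[R]_n) : R :=
  \sum_i \sum_j block_mask i j * ((i == j)%:R - Y i j) ^+ 2.

Definition penalty (Y : 'M[R]_n) : R := block_misfit Y + 2 * frob L Y.

Lemma block_misfit_ge0 Y : 0 <= block_misfit Y.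
Proof.
by do 2![apply: sumr_ge0 => ? _]; apply: mulr_ge0 (block_mask_ge0 _ _) (sqr_ge0 _).
Qed.

Lemma penalty_continuous :
  continuous (fun v : 'rV[R]_(n * n) => penalty ((vec_mx v)^T *m vec_mx v)).
Proof.
have cc (a : R) : continuous (fun _ : 'rV[R]_(n * n) => a) by exact: cst_continuous.
have sumc (F : 'I_n -> 'I_n -> 'rV[R]_(n * n) -> R) : (forall i j, continuous (F i j)) ->
    continuous (fun v => \sum_i \sum_j F i j v).
  move=> Fc; apply: continuous_big => [|i _]; first exact: add_continuous.
  by apply: continuous_big => [|j _]; [exact: add_continuous | exact: Fc].
have Yc := @continuous_gram_entry R n.
rewrite /penalty /block_misfit /frob.
apply: continuousD_rV; last apply: continuousM_rV (cc _) _; apply: sumc => i j.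
  have Ydc : continuous
      (fun v : 'rV[R]_(n * n) => (i == j)%:R - ((vec_mx v)^T *m vec_mx v) i j).
    by move=> v; apply: cvgB (cc _ v) (Yc i j v).
  by apply: continuousM_rV (cc _) _; apply: continuousM_rV.
exact: continuousM_rV (cc _) (Yc i j).
Qed.

Lemma block_misfit0 : block_misfit 0 = n%:R.
Proof.
rewrite /block_misfit -[n in RHS]card_ord -sumr_const; apply: eq_bigr => i _.
rewrite -[RHS](block_mask_diag i) -[RHS](sum_delta_mull (block_mask i) i).
apply: eq_bigr => j _; rewrite mxE subr0 mulrC.
by case: (i == j); rewrite ?expr1n ?expr0n ?mul0r.
Qed.

Lemma penalty0 : penalty 0 = n%:R.
Proof. by rewrite /penalty block_misfit0 frobE trmx0 mulmx0 mxtrace0 mulr0 addr0. Qed.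

Lemma block_id_of_misfit0 Y : block_misfit Y = 0 -> block_id P Y.
Proof.
have term_ge0 i j : 0 <= block_mask i j * ((i == j)%:R - Y i j) ^+ 2.
  exact: mulr_ge0 (block_mask_ge0 i j) (sqr_ge0 _).
move=> misfit0 I PI i j iI jI.
have row0 := psumr_eq0P (fun i _ => sumr_ge0 _ (fun j _ => term_ge0 i j)) misfit0.
have /eqP := psumr_eq0P (fun j _ => term_ge0 i j) (row0 i isT) (i := j) isT.
have ijP : same_block P i j by apply/same_blockP; exists I; rewrite ?iI.
by rewrite /block_mask ijP mul1r sqrf_eq0 subr_eq0 eq_sym => /eqP.
Qed.

(* Any cap above n(n+1) works: a minimiser has diagonal at most n+1
   (minimizer_diag_le), so it can be perturbed in every psd direction. *)
Definition trace_cap : R := (n * n.+1).+1%:R.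

Variable Y0 : 'M[R]_n.
Hypotheses (pY0 : psd Y0)
  (Y0_min : forall Y, psd Y -> \tr Y <= trace_cap -> penalty Y0 <= penalty Y).

Definition Bpen : 'M[R]_n := \matrix_(i, j) (block_mask i j * ((i == j)%:R - Y0 i j)).
Definition Lpen : 'M[R]_n := L - Bpen.

Lemma penalty_shift W s : penalty (Y0 + s *: W) =
  penalty Y0 + 2 * s * frob Lpen W + s ^+ 2 * \sum_i \sum_j block_mask i j * W i j ^+ 2.
Proof.
rewrite /penalty /block_misfit /frob !mulr_sumr -!big_split /=; apply: eq_bigr => i _.
rewrite !mulr_sumr -!big_split /=; apply: eq_bigr => j _.
by rewrite /Lpen /Bpen !mxE; ring.
Qed.

Lemma penalty_stationary W s0 : 0 < s0 ->
  (forall s, 0 < s -> s <= s0 -> psd (Y0 + s *: W) /\ \tr (Y0 + s *: W) <= trace_cap) ->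
  0 <= frob Lpen W.
Proof.
move=> s0_gt0 feas.
apply: (quadratic_ge0_slope_ge0 (q := \sum_i \sum_j block_mask i j * W i j ^+ 2) s0_gt0).
move=> s s_gt0 s_le; have [pYs trYs] := feas s s_gt0 s_le.
by have := Y0_min pYs trYs; rewrite penalty_shift; lra.
Qed.

Lemma minimizer_diag_le i : Y0 i i <= n.+1%:R.
Proof.
have penY0 : penalty Y0 <= n%:R.
  rewrite -penalty0; apply: Y0_min; last by rewrite linear0 ler0n.
  by have := psd_gram (0 : 'M[R]_n); rewrite mulmx0.
have sq_le : (1 - Y0 i i) ^+ 2 <= n%:R.
  apply: le_trans penY0.
  have term_ge0 a b : 0 <= block_mask a b * ((a == b)%:R - Y0 a b) ^+ 2.
    exact: mulr_ge0 (block_mask_ge0 a b) (sqr_ge0 _).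
  have := @ler_sum2 _ _ _ _ i i term_ge0; rewrite block_mask_diag eqxx mulr1n mul1r.
  by have := frob_psd_ge0 pL pY0; rewrite /penalty /block_misfit; lra.
have n_ge1 : 1 <= n%:R :> R by rewrite ler1n (leq_ltn_trans _ (ltn_ord i)).
by rewrite -natr1; nra.
Qed.

Lemma minimizer_trace_le : \tr Y0 <= (n * n.+1)%:R.
Proof.
apply: le_trans (ler_sum _ (fun i _ => minimizer_diag_le i)) _.
by rewrite sumr_const card_ord -mulrnA mulnC.
Qed.

Lemma trace_capE : trace_cap = (n * n.+1)%:R + 1.
Proof. by rewrite /trace_cap natr1. Qed.

Lemma frob_Lpen_minimizer : frob Lpen Y0 <= 0.
Proof.
rewrite -oppr_ge0 -frobNr; apply: (penalty_stationary ltr01) => s s_gt0 s_le1.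
have -> : Y0 + s *: - Y0 = (1 - s) *: Y0 by rewrite scalerBl scale1r scalerN.
split; first by apply: psdZ pY0; lra.
have := minimizer_trace_le; have := psd_trace_ge0 pY0.
by rewrite mxtraceZ trace_capE; nra.
Qed.

Lemma Lpen_psd : psd Lpen.
Proof.
split=> [|x].
  rewrite /Lpen linearB /= pL.1; congr (_ - _); apply/matrixP => i j.
  by rewrite !mxE block_maskC eq_sym -{2}pY0.1 mxE.
rewrite -[_ 0 0]/(mxform _ x x) -frob_outer; set W := x *m x^T.
have pW : psd W by have := psd_gram x^T; rewrite trmxK.
have t_ge0 := psd_trace_ge0 pW; set t := \tr W in t_ge0.
apply: (penalty_stationary (s0 := (1 + t)^-1)); first by rewrite invr_gt0; lra.
move=> s s_gt0 s_le; split; first by apply: psdD pY0 (psdZ (ltW s_gt0) pW).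
have : s * (1 + t) <= 1 by rewrite -ler_pdivlMr ?mul1r //; lra.
by have := minimizer_trace_le; rewrite mxtraceD mxtraceZ trace_capE -/t; lra.
Qed.

Lemma Bpen_blockdiag : blockdiag P Bpen.
Proof.
move=> i j nij; rewrite mxE /block_mask.
case: same_blockP => [[I PI ijI]|]; last by rewrite mul0r.
by have := nij I PI; rewrite ijI.
Qed.

Lemma trace_Bpen : \tr Bpen = block_misfit Y0 + frob L Y0 - frob Lpen Y0.
Proof.
rewrite /block_misfit /frob -big_split -sumrB /=; apply: eq_bigr => i _.
rewrite -big_split -sumrB /= -[LHS](sum_delta_mull (Bpen i) i); apply: eq_bigr => j _.
by rewrite /Lpen /Bpen !mxE; case: (i == j); ring.
Qed.

Lemma minimizer_realizes :
  (forall B L', bmtfa_feasible P L B L' -> \tr L <= \tr L') ->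
  elliptope P Y0 /\ L *m Y0 = 0.
Proof.
move=> L_opt.
have LE : L = Bpen + Lpen by rewrite /Lpen addrC subrK.
have := L_opt _ _ (conj LE (conj Lpen_psd Bpen_blockdiag)).
rewrite {1}LE mxtraceD gerDr => trB_le0.
have := trace_Bpen; have := block_misfit_ge0 Y0; have := frob_psd_ge0 pL pY0.
have := frob_Lpen_minimizer; move=> frob_Lpen_le0 frob_L_ge0 misfit_ge0 trB.
split; first by split=> //; apply: block_id_of_misfit0; lra.
by apply: frob_psd_eq0 => //; lra.
Qed.
End Penalty.

Lemma recoverable_realizable (R : realType) n (P : {set {set 'I_n}}) (U : 'M[R]_n) :
  partition P [set: 'I_n] -> recoverable P U -> realizable P U.
Proof.
move=> partP recU; set L := U^T *m U.
have pL : psd L := psd_gram U.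
have LU : (L^T == U)%MS by rewrite pL.1 gram_eqmx.
have [|Y0 pY0 Y0_min] :=
  psd_minorant_exists (c := trace_cap R n) _ (@penalty_continuous _ _ P L).
  by rewrite ler0n.
have [|elY0 LY0] := minimizer_realizes partP pL pY0 Y0_min.
  have dB0 : blockdiag P (0 : 'M[R]_n) by move=> i j _; rewrite mxE.
  have [_ L_opt] := recU 0 L dB0 (trmx0 _ _ _) pL LU.
  by move=> B L' feas; case: (L_opt B L'); rewrite ?add0r.
have Y0L : Y0 *m L = 0 by rewrite -pY0.1 -pL.1 -trmx_mul LY0 trmx0.
exists Y0; split=> // u uU; apply: (mulmx_trmx_submx (U := L^T)); last by rewrite trmxK.
by case/andP: LU => _ /(submx_trans uU).
Qed.

Theorem proposition5p4 (R : realType) (n : nat) (P : {set {set 'I_n}})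
  (U : 'M[R]_n) :
  partition P [set: 'I_n] ->
  (recoverable P U <-> realizable P U) /\
  (realizable P U <-> ellipsoid_fitting P (orthmx U)).
Proof.
move=> partP; split; split.
- exact: recoverable_realizable.
- exact: realizable_recoverable.
- exact: realizable_ellipsoid_fitting.
- exact: ellipsoid_fitting_realizable.
Qed.
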